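(* For all $n,k\ge 0$, with $C_j=\frac{1}{j+1}\binom{2j}{j}$ the Catalan numbers, $$\frac{1}{n+1}\binom{2n+2}{n-k}\binom{n+k}{k}=\sum_{j=0}^{n}\binom{j}{k}\binom{n+k}{2j}2^{\,n+k-2j}C_j .$$ Equivalently, the Borel polynomials $B_n(y)=\sum_{k=0}^nB_{n,k}y^k$ are the image of the Catalan sequence under the (bivariate) Riordan array $\left(\frac{1}{1-2x},\frac{x(x+y)}{(1-2x)^2}\right)$.
   Context: A Riordan array $(g(x),f(x))$ with $g(0)\neq0$, $f(0)=0$, $f'(0)\ne0$ is the lower-triangular matrix with $(n,k)$ entry $[x^n]g(x)f(x)^k$; it acts on a sequence with generating function $h(x)$ to give the sequence with generating function $g(x)h(f(x))$. Binomial coefficients with lower index out of range are $0$. *)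

From HB Require Import structures.
From mathcomp Require Import all_boot all_order all_algebra.
Set Implicit Arguments. Unset Strict Implicit. Unset Printing Implicit Defensive.
Import Order.TTheory GRing.Theory Num.Theory.
Local Open Scope ring_scope.

Definition catalan (j : nat) : rat := ('C(j.*2, j))%:R / (j.+1)%:R.

From HB Require Import structures.
From mathcomp Require Import all_boot all_order all_algebra.
From mathcomp Require Import ring zify.
Set Implicit Arguments. Unset Strict Implicit. Unset Printing Implicit Defensive.
Import Order.TTheory GRing.Theory Num.Theory.
Local Open Scope ring_scope.

(* Reindex by s = n - j. Repeated use of the subset-of-a-subset identity
   C(N, m + p) C(m + p, m) = C(N, m) C(N - m, p) turns the j-th summand into
   C(n + k, k) / (n + 1) * C(n + 1, s) C(s, n - k - s) 2^(2s - (n - k)),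
   and the sum over s of the last factor is the coefficient of x^(n - k) in
   (1 + x (2 + x))^(n + 1) = (1 + x)^(2n + 2). *)

Lemma coef_CaddX_exp (R : comNzRingType) (a : R) m r :
  ((a%:P + 'X) ^+ m)`_r = 'C(m, r)%:R * a ^+ (m - r).
Proof.
have -> : (a%:P + 'X) ^+ m = \sum_(i < m.+1) ('C(m, i)%:R * a ^+ (m - i)) *: 'X^i.
  by rewrite exprDn; apply: eq_bigr => i _; rewrite -rmorphXn mul_polyC -scaler_nat scalerA.
rewrite coef_sumMXn (big_ord1_eq _ (fun i => 'C(m, i)%:R * a ^+ (m - i))).
by case: ltnP => // lt_mr; rewrite bin_small ?mul0r.
Qed.

Lemma bin_mul_bin N m p : (m + p <= N)%N ->
  ('C(N, m + p) * 'C(m + p, m) = 'C(N, m) * 'C(N - m, p))%N.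
Proof.
move=> le_mpN; have le_pNm : (p <= N - m)%N by lia.
apply/eqP; rewrite -(@eqn_pmul2r (m`! * p`! * (N - m - p)`!)) ?muln_gt0 ?fact_gt0 //.
apply/eqP; transitivity N`!.
  rewrite -(bin_fact le_mpN) -(bin_fact (leq_addr p m)) addKn subnDA; ring.
rewrite -(bin_fact (leq_trans (leq_addr p m) le_mpN)) -(bin_fact le_pNm); ring.
Qed.

Lemma bin_double_sum N r : 'C(N.*2, r) =
  (\sum_(s < N.+1 | s <= r) 'C(N, s) * 'C(s, r - s) * 2 ^ (s - (r - s)))%N.
Proof.
apply/eqP; rewrite -(eqr_nat int) natr_sum; apply/eqP.
have := @coef_CaddX_exp _ (1 : int) N.*2 r; rewrite expr1n mulr1 => <-.
have -> : (1%:P + 'X : {poly int}) ^+ N.*2 = (1 + 'X * (2%:R%:P + 'X)) ^+ N.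
  by rewrite -mul2n exprM polyC1 rmorph_nat; congr (_ ^+ _); ring.
rewrite exprDn coef_sum [RHS]big_mkcond; apply: eq_bigr => s _.
rewrite expr1n mul1r coefMn exprMn coefXnM coef_CaddX_exp ltnNge.
by case: (s <= r)%N; rewrite /= ?mul0rn // -mulr_natl !natrM natrX; ring.
Qed.

Lemma bin_sym_add m p : 'C(m + p, m) = 'C(m + p, p).
Proof. by rewrite -{2}(addnK p m) bin_sub ?leq_addl. Qed.

Lemma catalan_summand_nat n k j : (k <= j)%N -> (j.*2 <= n + k)%N ->
  ('C(j, k) * 'C(n + k, j.*2) * 'C(j.*2, j)
   = 'C(n + k, k) * 'C(n, j) * 'C(n - j, j - k))%N.
Proof.
move=> le_kj le_jnk.
have e1 : ('C(n + k, j.*2) * 'C(j.*2, j) = 'C(n + k, j) * 'C(n + k - j, j))%N.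
  by rewrite -addnn bin_mul_bin // addnn.
have e2 : ('C(n + k, j) * 'C(j, k) = 'C(n + k, k) * 'C(n, j - k))%N.
  by have := @bin_mul_bin (n + k) k (j - k); rewrite subnKC // addnK; apply; lia.
have e3 : ('C(n, j - k) * 'C(n + k - j, j) = 'C(n, j) * 'C(n - j, j - k))%N.
  have le1 : (j - k + j <= n)%N by lia.
  have le2 : (j + (j - k) <= n)%N by lia.
  rewrite -(bin_mul_bin le2) (addnC j) -bin_sym_add (bin_mul_bin le1).
  by congr (_ * 'C(_, _)); lia.
by rewrite -mulnA e1 mulnA (mulnC 'C(j, k)) e2 -mulnA e3 mulnA.
Qed.

Lemma catalan_summand n k j : (k <= j <= n)%N ->
  ('C(j, k) * 'C(n + k, j.*2) * 2 ^ (n + k - j.*2))%N%:R * catalan j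
  = 'C(n + k, k)%:R / n.+1%:R
    * ('C(n.+1, n - j) * 'C(n - j, j - k) * 2 ^ (n + k - j.*2))%N%:R.
Proof.
case/andP=> le_kj le_jn.
have [le_jnk | lt_nkj] := leqP j.*2 (n + k); last first.
  rewrite (bin_small lt_nkj) (@bin_small (n - j)); last by lia.
  by rewrite !(muln0, mul0n, mul0r, mulr0).
have binSS_ratio : 'C(n.+1, n - j)%:R = 'C(n, j)%:R * n.+1%:R / j.+1%:R :> rat.
  apply: (mulIf (_ : j.+1%:R != 0)); first by rewrite pnatr_eq0.
  by rewrite divfK ?pnatr_eq0 // -subSS bin_sub // -!natrM mulnC -mul_bin_diag mulnC.
rewrite /catalan mulrA -natrM mulnAC catalan_summand_nat // !natrM binSS_ratio.
by field; rewrite !(addrC 1) !natr1 !pnatr_eq0.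
Qed.

Theorem mainTheorem5 (n k : nat) :
  ((if k <= n then 'C(n.*2.+2, n - k) * 'C(n + k, k) else 0)%N%:R / (n.+1)%:R : rat)
  = \sum_(0 <= j < n.+1)
      ('C(j, k) * 'C(n + k, j.*2) * 2 ^ (n + k - j.*2))%N%:R * catalan j.
Proof.
have [le_kn | lt_nk] := leqP k n; last first.
  rewrite mul0r big_nat big1 // => j /andP[_ lt_jn].
  by rewrite bin_small ?mul0n ?mul0r //; apply: leq_trans lt_nk.
rewrite -doubleS bin_double_sum big_mkcond big_ord_recr /= ltnNge leq_subr /= addn0.
rewrite big_nat_rev big_mkord natrM natr_sum !mulr_suml.
apply: eq_bigr => s _ /=; rewrite add0n subSS.
have le_sn : (s <= n)%N := ltn_ord s.
case: leqP => [le_s_nk | lt_nk_s]; last first.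
  by rewrite (@bin_small (n - s) k) ?mul0n ?mul0r //; lia.
rewrite catalan_summand; last by lia.
rewrite subKn // (subnAC n s k) (_ : n + k - (n - s).*2 = s - (n - k - s))%N; last by lia.
by ring.
Qed.
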